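(* Let $\mathcal M$ be an MDP and consider a relational reachability property $$\exists \sigma_1,\ldots,\sigma_n \in \Sigma^{\mathcal M}.~ \sum_{i=1}^{m} q_i \cdot \Pr^{\sigma_{k_i}}_{s_i}(\Diamond T_i) ~\mathsf{comp}~ q_{m+1} \qquad (\star)$$ as in the context. Let $\mathsf{Comb}=\{(s_i,k_i)\mid i=1,\ldots,m\}=\{c_1,\ldots,c_k\}$ (the distinct pairs of initial state and scheduler index occurring in $(\star)$), and for $c\in\mathsf{Comb}$ let $\mathit{ind}(c)=\{i\in\{1,\dots,m\}\mid (s_i,k_i)=c\}$. Then $(\star)$ holds in $\mathcal M$ if and only if $$\exists \sigma_{c_1},\ldots,\sigma_{c_k}\in \Sigma^{\mathcal M}.~ \sum_{i=1}^{k} \Big[\sum_{j\in \mathit{ind}(c_i)} q_j\cdot \Pr^{\sigma_{c_i}}_{s_j}(\Diamond T_j)\Big] ~\mathsf{comp}~ q_{m+1},$$ i.e., one may quantify over a separate (general) scheduler for each state–scheduler combination.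
   Context: An MDP is a triple $\mathcal M=(S,\mathrm{Act},P)$ where $S$ and $\mathrm{Act}$ are finite non-empty sets and $P:S\times\mathrm{Act}\times S\to[0,1]$ is such that for every $s\in S$ the set of enabled actions $\mathrm{Act}(s)=\{\alpha\mid \sum_{s'}P(s,\alpha,s')=1\}$ is non-empty and $\sum_{s'}P(s,\alpha,s')=0$ for $\alpha\notin\mathrm{Act}(s)$. A finite path is a sequence $s_0\alpha_0s_1\ldots\alpha_{n-1}s_n$ with $P(s_i,\alpha_i,s_{i+1})>0$. A (general, i.e. history-dependent randomized) scheduler is a function $\sigma$ mapping finite paths to probability distributions over $\mathrm{Act}$, supported on the enabled actions of the last state of the path; $\Sigma^{\mathcal M}$ is the set of all such schedulers. For a scheduler $\sigma$, state $s$ and $T\subseteq S$, $\Pr^{\sigma}_{s}(\Diamond T)$ is the probability of eventually reaching $T$ starting from $s$ in the Markov chain induced by $\sigma$. In $(\star)$: $m\ge n$ are naturals, $q_1,\ldots,q_{m+1}\in\mathbb Q$, $s_1,\ldots,s_m\in S$ (not necessarily distinct), $\{k_1,\ldots,k_m\}=\{1,\ldots,n\}$, $T_1,\ldots,T_m\subseteq S$ (not necessarily distinct), and $\mathsf{comp}\in\{>,\ge,\approx_\epsilon,\not\approx_\epsilon\mid \epsilon\in\mathbb Q_{\ge 0}\}$, where $r\approx_\epsilon r'$ iff $|r-r'|\le\epsilon$ and $r\not\approx_\epsilon r'$ iff $|r-r'|>\epsilon$. *)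

From HB Require Import structures.
From mathcomp Require Import all_boot all_order all_algebra.
From mathcomp Require Import boolp classical_sets reals.
Set Implicit Arguments. Unset Strict Implicit. Unset Printing Implicit Defensive.
Import Order.TTheory GRing.Theory Num.Theory.
Local Open Scope ring_scope.
Local Open Scope classical_set_scope.

Section MDP.
Variables (R : realType) (S Act : finType).

Definition trans := S -> Act -> S -> R.

Definition enabled (P : trans) (s : S) (a : Act) : bool :=
  \sum_(s' : S) P s a s' == 1.

Definition is_MDP (P : trans) : Prop :=
  [/\ (0 < #|S|)%N, (0 < #|Act|)%N,
      (forall s a s', 0 <= P s a s' <= 1),
      (forall s a, enabled P s a \/ \sum_(s' : S) P s a s' = 0) &
      (forall s, exists a, enabled P s a)].

(* A finite path s0 a0 s1 ... a_{n-1} s_n is represented by its initial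
   state s0 and the sequence [:: (a0,s1); ...; (a_{n-1},s_n)]. *)
Definition path_last (s0 : S) (p : seq (Act * S)) : S := last s0 (map snd p).
Definition path_states (s0 : S) (p : seq (Act * S)) : seq S := s0 :: map snd p.

(* A general (history-dependent, randomized) scheduler: maps a finite path
   to a distribution over actions. *)
Definition scheduler := S -> seq (Act * S) -> Act -> R.

Definition is_scheduler (P : trans) (sigma : scheduler) : Prop :=
  forall s0 p,
    [/\ (forall a, 0 <= sigma s0 p a),
        \sum_(a : Act) sigma s0 p a = 1 &
        (forall a, ~~ enabled P (path_last s0 p) a -> sigma s0 p a = 0)].

(* probability of the cylinder of the continuation [rest] after history (s0,h)
   in the Markov chain induced by sigma *)
Fixpoint cont_prob (P : trans) (sigma : scheduler) (s0 : S)
    (h : seq (Act * S)) (rest : seq (Act * S)) : R :=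
  match rest with
  | [::] => 1
  | (a, s') :: r =>
      sigma s0 h a * P (path_last s0 h) a s' *
      cont_prob P sigma s0 (rcons h (a, s')) r
  end.

Definition path_prob (P : trans) (sigma : scheduler) (s0 : S)
    (p : seq (Act * S)) : R := cont_prob P sigma s0 [::] p.

Definition first_hit (T : {set S}) (s0 : S) (p : seq (Act * S)) : bool :=
  (path_last s0 p \in T) && all (fun x => x \notin T) (belast s0 (map snd p)).

Definition reach_within (P : trans) (sigma : scheduler) (s0 : S)
    (T : {set S}) (n : nat) : R :=
  \sum_(k < n.+1) \sum_(t : k.-tuple (Act * S) | first_hit T s0 t)
     path_prob P sigma s0 t.

(* Pr^sigma_s0 (<> T): probability of eventually reaching T, i.e. the
   supremum (= limit) of the nondecreasing probabilities of reaching T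
   within n steps (continuity of the measure from below). *)
Definition Pr_reach (P : trans) (sigma : scheduler) (s0 : S)
    (T : {set S}) : R :=
  sup [set reach_within P sigma s0 T n | n in [set: nat]].

End MDP.

Inductive cmp_op := CGt | CGe | CApprox of rat | CNApprox of rat.

Definition comp_ok (c : cmp_op) : bool :=
  match c with
  | CApprox e | CNApprox e => 0 <= e
  | _ => true
  end.

Definition comp_holds (R : realType) (c : cmp_op) (x y : R) : bool :=
  match c with
  | CGt => x > y
  | CGe => x >= y
  | CApprox e => `|x - y| <= ratr e
  | CNApprox e => `|x - y| > ratr e
  end.

(* The probability of reaching a set from s0 under a scheduler depends only on
   the scheduler's choices on paths starting in s0. Hence the schedulers that
   one index k uses from different initial states can be merged into a single
   scheduler that dispatches on the initial state, and conversely a scheduler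
   per index yields one per (state, index) combination by restriction. Grouping
   the summands by combination turns one weighted sum into the other. *)
From HB Require Import structures.
From mathcomp Require Import all_boot all_order all_algebra.
From mathcomp Require Import boolp classical_sets reals.
Set Implicit Arguments. Unset Strict Implicit. Unset Printing Implicit Defensive.
Import Order.TTheory GRing.Theory Num.Theory.
Local Open Scope ring_scope.

Section Dispatch.
Variables (R : realType) (S Act : finType) (P : trans R S Act).

Lemma cont_prob_eq_from (sig1 sig2 : scheduler R S Act) s0 :
  sig1 s0 = sig2 s0 -> forall r h, cont_prob P sig1 s0 h r = cont_prob P sig2 s0 h r.
Proof. by move=> eq_s0; elim=> [|[a s'] r IHr] h //=; rewrite IHr eq_s0. Qed.

Lemma Pr_reach_eq_from (sig1 sig2 : scheduler R S Act) s0 T :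
  sig1 s0 = sig2 s0 -> Pr_reach P sig1 s0 T = Pr_reach P sig2 s0 T.
Proof.
move=> eq_s0; rewrite /Pr_reach; congr (sup [set _ | _ in _]); apply: funext => N.
apply: eq_bigr => K _; apply: eq_bigr => t _.
by rewrite /path_prob (cont_prob_eq_from eq_s0).
Qed.

Definition dispatch_scheduler (f : S -> scheduler R S Act) : scheduler R S Act :=
  fun s0 => f s0 s0.

Lemma dispatch_scheduler_is_scheduler (f : S -> scheduler R S Act) :
  (forall s0, is_scheduler P (f s0)) -> is_scheduler P (dispatch_scheduler f).
Proof. by move=> f_sched s0; apply: f_sched. Qed.

Lemma Pr_reach_dispatch (f : S -> scheduler R S Act) s0 T :
  Pr_reach P (dispatch_scheduler f) s0 T = Pr_reach P (f s0) s0 T.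
Proof. exact: Pr_reach_eq_from. Qed.

End Dispatch.

Section Combinations.
Variables (S : finType) (m n : nat) (s : 'I_m -> S) (k : 'I_m -> 'I_n).

(* Outside the combinations any combination, here that of [i0], will do: its
   scheduler only has to be a valid scheduler. *)
Definition combination_of (i0 : 'I_m) (j : 'I_n) (s0 : S) : S * 'I_n :=
  if (s0, j) \in [set (s i, k i) | i : 'I_m] then (s0, j) else (s i0, k i0).

Lemma combination_of_mem i0 j s0 :
  combination_of i0 j s0 \in [set (s i, k i) | i : 'I_m].
Proof. by rewrite /combination_of; case: ifP => // _; apply/imsetP; exists i0. Qed.

Lemma combination_of_id i0 i : combination_of i0 (k i) (s i) = (s i, k i).
Proof. by rewrite /combination_of ifT //; apply/imsetP; exists i. Qed.

End Combinations.

Theorem lemma1 (R : realType) (S Act : finType) (P : trans R S Act)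
  (m n : nat) (q : 'I_m -> rat) (q_last : rat)
  (s : 'I_m -> S) (k : 'I_m -> 'I_n) (T : 'I_m -> {set S}) (c : cmp_op) :
  is_MDP P ->
  (n <= m)%N ->
  (forall j : 'I_n, exists i : 'I_m, k i = j) ->
  comp_ok c ->
  (exists sigma : 'I_n -> scheduler R S Act,
      (forall j, is_scheduler P (sigma j)) /\
      comp_holds c
        (\sum_(i < m) ratr (q i) * Pr_reach P (sigma (k i)) (s i) (T i))
        (ratr q_last))
  <->
  (exists sigma : S * 'I_n -> scheduler R S Act,
      (forall cb, cb \in [set (s i, k i) | i : 'I_m] -> is_scheduler P (sigma cb)) /\
      comp_holds c
        (\sum_(cb in [set (s i, k i) | i : 'I_m])
           \sum_(j < m | (s j, k j) == cb)
              ratr (q j) * Pr_reach P (sigma cb) (s j) (T j))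
        (ratr q_last)).
Proof.
(* The fallback index [widen_ord le_nm j] exists because [n <= m]. *)
move=> _ le_nm _ _.
have by_combination (F : 'I_m -> R) : \sum_(i < m) F i =
    \sum_(cb in [set (s i, k i) | i : 'I_m]) \sum_(j < m | (s j, k j) == cb) F j.
  by rewrite (partition_big_imset (fun i => (s i, k i))).
split=> [[sigma [sigma_sched holds]] | [sigma [sigma_sched holds]]].
- exists (fun cb => sigma cb.2); split=> [cb _|]; first exact: sigma_sched.
  move: holds; rewrite by_combination; congr comp_holds.
  by apply: eq_bigr => cb _; apply: eq_bigr => j /eqP <-.
- pose sigma_of j := dispatch_scheduler
    (fun s0 => sigma (combination_of s k (widen_ord le_nm j) j s0)).
  exists sigma_of; split=> [j|].
    by apply: dispatch_scheduler_is_scheduler => s0; apply/sigma_sched/combination_of_mem.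
  rewrite by_combination; move: holds; congr comp_holds.
  apply: eq_bigr => cb _; apply: eq_bigr => j /eqP <-.
  by rewrite Pr_reach_dispatch combination_of_id.
Qed.
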